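(* The minus operator $-$ of the W3C SPARQL algebra is expressible in the core SPARQL algebra. That is, for all multisets of mappings $\Omega_1,\Omega_2$, the multiset $\Omega_1-\Omega_2$ (with its multiplicities) can be obtained by an expression using only projection, selection, join, union and simple difference.
   Context: Fix pairwise disjoint infinite sets $I$ (IRIs), $L$ (literals) and $V$ (variables), and let $T=I\cup L$. Solution mappings. A mapping is a partial function $\mu:V\to T$ with domain $\operatorname{dom}(\mu)$. Mappings $\mu_1,\mu_2$ are compatible ($\mu_1\sim\mu_2$) if they agree on every variable in $\operatorname{dom}(\mu_1)\cap\operatorname{dom}(\mu_2)$; then $\mu_1\cup\mu_2$ is a mapping. Multisets. A multiset $\Omega$ of mappings assigns multiplicities $\mathrm{card}_\Omega(\mu)\ge0$, and $\operatorname{dom}(\Omega)=\bigcup_{\mu\in\Omega}\operatorname{dom}(\mu)$. Selection formulas. The atomic ones are $(?X=c)$, $(?X=?Y)$ and $\operatorname{bound}(?X)$; they are closed under $\land$, $\lor$ and $\neg$. They are evaluated under a mapping in the three-valued logic $\{\mathit{true},\mathit{false},\mathit{error}\}$: - an equality is $\mathit{error}$ if a mentioned variable is unbound, and otherwise $\mathit{true}$ or $\mathit{false}$ according to equality; - $\operatorname{bound}(?X)$ is $\mathit{true}$ iff $?X$ is bound, and $\mathit{false}$ otherwise; - $\land$ and $\lor$ follow Kleene's strong three-valued logic with $\mathit{error}$ as the unknown value, and $\neg(\mathit{error})=\mathit{error}$. Operations, for multisets $\Omega_1,\Omega_2$. - Projection: $\pi_W$ restricts each mapping to $W$ and sums multiplicities.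 - Selection: $\sigma_F$ keeps the mappings on which $F$ evaluates to $\mathit{true}$. - Join: $\Omega_1\Join\Omega_2$ consists of the unions $\mu_1\cup\mu_2$ of compatible pairs, with multiplicities being sums of products. - Union: $\Omega_1\cup\Omega_2$, with multiplicities added. - Simple difference: $\Omega_1\setminus\Omega_2=\{\mu_1\in\Omega_1\mid\forall\mu_2\in\Omega_2,\ \mu_1\nsim\mu_2\}$, with multiplicities as in $\Omega_1$. - Minus: $\Omega_1-\Omega_2=\{\mu_1\in\Omega_1\mid\forall\mu_2\in\Omega_2,\ \mu_1\nsim\mu_2\lor\operatorname{dom}(\mu_1)\cap\operatorname{dom}(\mu_2)=\emptyset\}$, with multiplicities as in $\Omega_1$. The core SPARQL algebra consists of projection, selection, join, union and simple difference. An operator $O$ is expressible in a language $L$ iff some subset of the operators of $L$ can express the same queries as $O$. *)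

From mathcomp Require Import all_boot.
From mathcomp Require Import finmap.
Set Implicit Arguments. Unset Strict Implicit. Unset Printing Implicit Defensive.
Local Open Scope fset_scope.
Local Open Scope fmap_scope.

Section SPARQL.
(* V : variables, T = I ∪ L : IRIs and literals (only equality of terms matters). *)
Variables (V T : choiceType).

Definition mapping := {fmap V -> T}.

(* A multiset of mappings: a finite sequence, multiplicities = number of
   occurrences; two multisets are equal iff they are permutations (perm_eq). *)
Definition mset := seq mapping.

Definition compatible (m1 m2 : mapping) : bool :=
  all (fun x => (x \notin domf m2) || (m1.[? x] == m2.[? x])) (domf m1).

Definition mapping_union (m1 m2 : mapping) : mapping := catf m1 m2.

Definition dom_disjoint (m1 m2 : mapping) : bool :=
  domf m1 `&` domf m2 == fset0.

Inductive tv := TTrue | TFalse | TError.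

Definition tv_and (a b : tv) : tv :=
  match a, b with
  | TFalse, _ | _, TFalse => TFalse
  | TTrue, TTrue => TTrue
  | _, _ => TError
  end.

Definition tv_or (a b : tv) : tv :=
  match a, b with
  | TTrue, _ | _, TTrue => TTrue
  | TFalse, TFalse => TFalse
  | _, _ => TError
  end.

Definition tv_not (a : tv) : tv :=
  match a with TTrue => TFalse | TFalse => TTrue | TError => TError end.

Inductive formula :=
  | FEqC of V & T
  | FEqV of V & V
  | FBound of V
  | FAnd of formula & formula
  | FOr of formula & formula
  | FNot of formula.

Fixpoint feval (F : formula) (m : mapping) : tv :=
  match F with
  | FEqC x c => match m.[? x] with
                | Some a => if a == c then TTrue else TFalse
                | None => TError end
  | FEqV x y => match m.[? x], m.[? y] with
                | Some a, Some b => if a == b then TTrue else TFalse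
                | _, _ => TError end
  | FBound x => if x \in domf m then TTrue else TFalse
  | FAnd F1 F2 => tv_and (feval F1 m) (feval F2 m)
  | FOr F1 F2 => tv_or (feval F1 m) (feval F2 m)
  | FNot F1 => tv_not (feval F1 m)
  end.

Definition proj (W : {fset V}) (O : mset) : mset := [seq restrictf m W | m <- O].
Definition select (F : formula) (O : mset) : mset :=
  [seq m <- O | if feval F m is TTrue then true else false].
Definition join (O1 O2 : mset) : mset :=
  flatten [seq [seq mapping_union m1 m2 | m2 <- O2 & compatible m1 m2] | m1 <- O1].
Definition munion (O1 O2 : mset) : mset := O1 ++ O2.
Definition sdiff (O1 O2 : mset) : mset :=
  [seq m1 <- O1 | all (fun m2 => ~~ compatible m1 m2) O2].
Definition minus (O1 O2 : mset) : mset :=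
  [seq m1 <- O1 | all (fun m2 => ~~ compatible m1 m2 || dom_disjoint m1 m2) O2].

Inductive expr :=
  | ELeaf of nat
  | EProj of {fset V} & expr
  | ESel of formula & expr
  | EJoin of expr & expr
  | EUnion of expr & expr
  | EDiff of expr & expr
  | EMinus of expr & expr.

Fixpoint eval (env : nat -> mset) (e : expr) : mset :=
  match e with
  | ELeaf i => env i
  | EProj W e1 => proj W (eval env e1)
  | ESel F e1 => select F (eval env e1)
  | EJoin e1 e2 => join (eval env e1) (eval env e2)
  | EUnion e1 e2 => munion (eval env e1) (eval env e2)
  | EDiff e1 e2 => sdiff (eval env e1) (eval env e2)
  | EMinus e1 e2 => minus (eval env e1) (eval env e2)
  end.

Fixpoint core (e : expr) : bool :=
  match e with
  | ELeaf _ => true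
  | EProj _ e1 | ESel _ e1 => core e1
  | EJoin e1 e2 | EUnion e1 e2 | EDiff e1 e2 => core e1 && core e2
  | EMinus _ _ => false
  end.

(* An environment respects a schema if every mapping of input i has its
   domain inside the finite variable set sch i (as for a graph pattern,
   whose solutions only bind variables occurring in it). *)
Definition respects (sch : nat -> {fset V}) (env : nat -> mset) : Prop :=
  forall i, all (fun m => domf m `<=` sch i) (env i).

End SPARQL.

From mathcomp Require Import all_boot.
From mathcomp Require Import finmap.

(* If every mapping of [O2] binds only variables of a finite set [X], then a
   mapping [m] survives [O1 - O2] iff for each [x] in [X] it either leaves [x]
   unbound or is incompatible with all mappings of [O2] binding [x].  Each such
   condition is imposed on an intermediate result [O] by one core step
     (sigma_bound(x) O \ sigma_bound(x) O2) U sigma_(~bound(x)) O,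
   and chaining these steps over [X] yields [O1 - O2].  A finite [X] is given by
   the schema. *)

Lemma perm_flatten_map (A B : eqType) (f g : A -> seq B) (s : seq A) :
  (forall x, perm_eq (f x) (g x)) -> perm_eq (flatten (map f s)) (flatten (map g s)).
Proof. by move=> fg; elim: s => [|x s IHs] //=; apply: perm_cat. Qed.

Lemma perm_filter_all (A B : eqType) (p : A -> B -> bool) (s s' : seq A) (t t' : seq B) :
  perm_eq s s' -> perm_eq t t' ->
  perm_eq [seq x <- s | all (p x) t] [seq x <- s' | all (p x) t'].
Proof.
move=> ss' tt'; apply: perm_trans (perm_filter _ ss') _.
by rewrite (eq_filter (a2 := fun x => all (p x) t')) // => x; exact: eq_all_r (perm_mem tt') _.
Qed.

Section MinusElimination.
Variables (V T : choiceType).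
Local Notation mapping := (mapping V T).
Local Notation mset := (mset V T).
Local Notation expr := (expr V T).
Local Open Scope fset_scope.

Lemma perm_join [O1 O1' O2 O2' : mset] : perm_eq O1 O1' -> perm_eq O2 O2' ->
  perm_eq (join O1 O2) (join O1' O2').
Proof.
move=> O11 O22; apply: perm_trans (perm_flatten (perm_map _ O11)) _.
by apply: perm_flatten_map => m1; apply/perm_map/perm_filter.
Qed.

Lemma perm_sdiff [O1 O1' O2 O2' : mset] : perm_eq O1 O1' -> perm_eq O2 O2' ->
  perm_eq (sdiff O1 O2) (sdiff O1' O2').
Proof. exact: perm_filter_all. Qed.

Lemma perm_minus [O1 O1' O2 O2' : mset] : perm_eq O1 O1' -> perm_eq O2 O2' ->
  perm_eq (minus O1 O2) (minus O1' O2').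
Proof. exact: perm_filter_all. Qed.

Definition doms_sub (X : {fset V}) (O : mset) : bool := all (fun m : mapping => domf m `<=` X) O.

Fixpoint dom_bound (sch : nat -> {fset V}) (e : expr) : {fset V} :=
  match e with
  | ELeaf i => sch i
  | EProj W _ => W
  | ESel _ e1 | EDiff e1 _ | EMinus e1 _ => dom_bound sch e1
  | EJoin e1 e2 | EUnion e1 e2 => dom_bound sch e1 `|` dom_bound sch e2
  end.

Lemma doms_sub_filter X (p : pred mapping) O : doms_sub X O -> doms_sub X (filter p O).
Proof. by rewrite /doms_sub all_filter => /allP sub; apply/allP => m /sub mX; rewrite /= mX implybT. Qed.

Lemma doms_sub_trans X Y O : X `<=` Y -> doms_sub X O -> doms_sub Y O.
Proof. by move=> XY /allP sub; apply/allP => m /sub /fsubset_trans; apply. Qed.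

Lemma eval_dom_bound sch env e : respects sch env -> doms_sub (dom_bound sch e) (eval env e).
Proof.
move=> resp; elim: e => [i|W e1 _|F e1 IH|e1 IH1 e2 IH2|e1 IH1 e2 IH2|e1 IH1 e2 _|e1 IH1 e2 _] /=.
- exact: resp.
- by apply/allP => _ /mapP [m _ ->]; rewrite domf_restrict fsubsetIl.
- exact: doms_sub_filter.
- apply/allP => m /flattenP [s /mapP [m1 m1O1 ->]] /mapP [m2].
  rewrite mem_filter => /andP [_ m2O2] ->; rewrite domf_cat.
  by apply: fsetUSS; [apply: (allP IH1) | apply: (allP IH2)].
- rewrite /doms_sub all_cat; apply/andP; split.
    exact: doms_sub_trans (fsubsetUl _ _) IH1.
  exact: doms_sub_trans (fsubsetUr _ _) IH2.
- exact: doms_sub_filter.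
- exact: doms_sub_filter.
Qed.

Definition minus_at (O2 : mset) (x : V) (m1 : mapping) : bool :=
  (x \notin domf m1) || all (fun m2 => ~~ compatible m1 m2) [seq m2 <- O2 | x \in domf m2].

Lemma minus_by_vars (X : {fset V}) (O1 O2 : mset) : doms_sub X O2 ->
  minus O1 O2 = [seq m1 <- O1 | all (fun x => minus_at O2 x m1) (enum_fset X)].
Proof.
move=> /allP O2X; apply: eq_filter => m1; apply/allP/allP => [surv x _ | surv m2 m2O2].
  rewrite /minus_at; case x1: (x \in domf m1) => //=.
  apply/allP => m2; rewrite mem_filter => /andP [x2 m2O2].
  move: (surv m2 m2O2); case: (compatible m1 m2) => //= /eqP disj.
  have : x \in domf m1 `&` domf m2 by rewrite inE x1 x2.
  by rewrite disj inE.
rewrite /dom_disjoint; case: eqP => [_|/eqP]; first by rewrite orbT.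
move=> /fset0Pn [x]; rewrite inE => /andP [x1 x2].
have /surv : x \in enum_fset X by apply: (fsubsetP (O2X _ m2O2)).
by rewrite /minus_at x1 orbF => /allP; apply; rewrite mem_filter x2.
Qed.

Definition minus_step (e2 : expr) (x : V) (acc : expr) : expr :=
  EUnion (EDiff (ESel (FBound T x) acc) (ESel (FBound T x) e2))
         (ESel (FNot (FBound T x)) acc).

Definition minus_expr (xs : seq V) (e1 e2 : expr) : expr := foldr (minus_step e2) e1 xs.

Lemma select_bound (x : V) (O : mset) : select (FBound T x) O = [seq m <- O | x \in domf m].
Proof. by apply: eq_filter => m /=; case: (x \in domf m). Qed.

Lemma select_unbound (x : V) (O : mset) :
  select (FNot (FBound T x)) O = [seq m <- O | x \notin domf m].
Proof. by apply: eq_filter => m /=; case: (x \in domf m). Qed.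

Lemma eval_minus_step env e2 x acc :
  perm_eq (eval env (minus_step e2 x acc)) [seq m <- eval env acc | minus_at (eval env e2) x m].
Proof.
rewrite /= /munion /sdiff !select_bound select_unbound.
apply: perm_trans (permEl (perm_filterC (fun m : mapping => x \in domf m) _)).
rewrite -!filter_predI; apply: perm_cat; apply/permP => p; congr count; apply: eq_filter => m /=;
  by rewrite /minus_at; case: (x \in domf m); rewrite ?andbT ?andbF.
Qed.

Lemma eval_minus_expr env xs e1 e2 :
  perm_eq (eval env (minus_expr xs e1 e2))
          [seq m <- eval env e1 | all (fun x => minus_at (eval env e2) x m) xs].
Proof.
elim: xs => [|x xs IHxs] /=; first by rewrite (eq_filter (a2 := predT)) ?filter_predT.
apply: perm_trans (eval_minus_step _ _ _ _) _.
apply: perm_trans (perm_filter _ IHxs) _.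
by rewrite -filter_predI; apply/permP => p; congr count; apply: eq_filter => m /=; rewrite andbC.
Qed.

Lemma core_minus_expr xs e1 e2 : core e1 -> core e2 -> core (minus_expr xs e1 e2).
Proof. by move=> c1 c2; elim: xs => //= x xs ->; rewrite c2. Qed.

Fixpoint elim_minus (sch : nat -> {fset V}) (e : expr) : expr :=
  match e with
  | ELeaf i => ELeaf V T i
  | EProj W e1 => EProj W (elim_minus sch e1)
  | ESel F e1 => ESel F (elim_minus sch e1)
  | EJoin e1 e2 => EJoin (elim_minus sch e1) (elim_minus sch e2)
  | EUnion e1 e2 => EUnion (elim_minus sch e1) (elim_minus sch e2)
  | EDiff e1 e2 => EDiff (elim_minus sch e1) (elim_minus sch e2)
  | EMinus e1 e2 =>
      minus_expr (enum_fset (dom_bound sch e2)) (elim_minus sch e1) (elim_minus sch e2)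
  end.

Lemma core_elim_minus sch e : core (elim_minus sch e).
Proof.
elim: e => //= [e1 -> e2 ->|e1 -> e2 ->|e1 -> e2 ->|e1 IH1 e2 IH2] //.
exact: core_minus_expr.
Qed.

Lemma eval_elim_minus sch env e : respects sch env ->
  perm_eq (eval env e) (eval env (elim_minus sch e)).
Proof.
move=> resp; elim: e => [i|W e1 IH1|F e1 IH1|e1 IH1 e2 IH2|e1 IH1 e2 IH2|e1 IH1 e2 IH2|e1 IH1 e2 IH2] /=.
- by [].
- exact: perm_map.
- exact: perm_filter.
- exact: perm_join.
- exact: perm_cat.
- exact: perm_sdiff.
apply: perm_trans (perm_minus IH1 IH2) _.
rewrite perm_sym (@minus_by_vars (dom_bound sch e2)); first exact: eval_minus_expr.
have /allP e2X := @eval_dom_bound sch env e2 resp.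
by apply/allP => m; rewrite -(perm_mem IH2); apply: e2X.
Qed.

End MinusElimination.

Theorem lemma3 (V T : choiceType)
    (infV : forall s : seq V, exists x : V, x \notin s)
    (infT : forall s : seq T, exists c : T, c \notin s)
    (sch : nat -> {fset V}) (e : expr V T) :
  exists e' : expr V T, core e' /\
    forall env : nat -> mset V T, respects sch env ->
      perm_eq (eval env e) (eval env e').
Proof.
exists (@elim_minus V T sch e); split; first exact: core_elim_minus.
by move=> env; apply: eval_elim_minus.
Qed.
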